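(* There exist positive integers $c_{i,k}$, for all $i\ge0$ and $i+1\le k\le 2^i$, such that for all $n\ge1$, \[ b_i(\mathcal{A}_n)=\sum_{k=i+1}^{2^i} c_{i,k}\,S(n+1,k). \] Moreover, $c_{i,k}\le \binom{2^i-1}{k-1}\frac{(k-1)!}{i!}$.
   Context: For $n\ge1$, the resonance arrangement $\mathcal{A}_n$ is the arrangement in $\mathbb{R}^n$ of the hyperplanes $H_I=\{x:\sum_{i\in I}x_i=0\}$ for all nonempty $I\subseteq[n]$. For an arrangement $\mathcal{A}$ in $\mathbb{F}^n$, its characteristic polynomial is $\chi(\mathcal{A};t)=\sum_{S\subseteq\mathcal{A}}(-1)^{|S|}t^{r(\mathcal{A})-r(S)}$ where $r(S)=\operatorname{codim}\bigcap_{H\in S}H$, and the $i$-th Betti number $b_i(\mathcal{A})$ is the absolute value of the coefficient of $t^{n-i}$ in $\chi(\mathcal{A};t)$. $S(n,k)$ denotes the Stirling number of the second kind, the number of partitions of an $n$-element set into $k$ nonempty blocks. *)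

From HB Require Import structures.
From mathcomp Require Import all_boot all_order all_algebra.
From mathcomp Require Import Rstruct.
From Stdlib Require Rdefinitions.
Set Implicit Arguments. Unset Strict Implicit. Unset Printing Implicit Defensive.
Import Order.TTheory GRing.Theory Num.Theory.
Local Open Scope ring_scope.

(* Normal vector of H_I = {x : sum_{i in I} x_i = 0} in R^n, as a column. *)
Definition normal_vec (n : nat) (I : {set 'I_n}) : 'cV[Rdefinitions.R]_n :=
  \col_(j < n) (if j \in I then 1 else 0).

Definition hyperplane (n : nat) (I : {set 'I_n}) : 'M[Rdefinitions.R]_n :=
  kermx (normal_vec I).

Definition resonance_idx (n : nat) : {set {set 'I_n}} :=
  [set I : {set 'I_n} | I != set0].

(* r(S) = codim of the intersection of the hyperplanes in S (intersection of
   the empty family is the whole space R^n). *)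
Definition rk (n : nat) (S : {set {set 'I_n}}) : nat :=
  subn n (\rank (\bigcap_(I in S) hyperplane I)%MS).

Definition char_poly_res (n : nat) : {poly int} :=
  \sum_(S in powerset (resonance_idx n))
     ((-1) ^+ #|S|) *: 'X^(subn (rk (resonance_idx n)) (rk S)).

Definition betti (n i : nat) : nat :=
  if (i <= n)%N then absz ((char_poly_res n)`_(subn n i)) else 0%N.

Definition stirling2 (m k : nat) : nat :=
  #|[set P : {set {set 'I_m}} | partition P [set: 'I_m] & #|P| == k]|.

From HB Require Import structures.
From mathcomp Require Import all_boot all_order all_algebra.
Import Order.TTheory GRing.Theory Num.Theory.
From mathcomp Require Import zify.
From mathcomp Require Import Rstruct.
From Stdlib Require Rdefinitions.
Set Implicit Arguments. Unset Strict Implicit. Unset Printing Implicit Defensive.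
Local Open Scope ring_scope.

(* The coefficient of t^(n-i) in chi(A_n; t) is the signed count of the
   subarrangements S of rank i (the rank of S being that of the indicator
   vectors of its members).  Grouping the S according to the partition of
   [n+1] = [n] + {extra point} they induce (two points are equivalent when no
   member of S separates them, the extra point lying in no member), the fiber
   over a partition with k blocks is, by merging blocks, in size- and
   rank-preserving bijection with the families of nonempty subsets of [k-1]
   that separate the points of [k-1] and the extra point.  So its signed count
   D(k-1, i) does not depend on n.  Whitney's NBC theorem, proved below by a
   sign-reversing involution, gives D(m, i) = (-1)^i c(i, m+1) where c counts
   the NBC separating families of size i for any fixed order.  Then:
   - c(i, k) = 0 unless i+1 <= k <= 2^i (independence and separation);
   - c(i, k) i! <= (2^i-1)(2^i-2)...(2^i-k+1), by writing an ordered separating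
     family column-wise as an injection of [k-1] into the nonempty subsets of [i];
   - c(i, k) > 0 in that range, by an explicit family, NBC for a well-chosen
     order, c being independent of the order. *)

Section VectorSpan.
Variables (F : fieldType) (E : finType) (n : nat) (v : E -> 'rV[F]_n).

Definition vspan (S : {set E}) : 'M[F]_n := (\sum_(e in S) <<v e>>)%MS.
Definition vrank (S : {set E}) : nat := \rank (vspan S).

Lemma vspan_subP p (A : 'M[F]_(p, n)) (S : {set E}) :
  reflect (forall e, e \in S -> (v e <= A)%MS) (vspan S <= A)%MS.
Proof.
apply: (iffP sumsmx_subP) => H e eS; first by rewrite -genmxE H.
by rewrite genmxE H.
Qed.

Lemma mem_vspan e (S : {set E}) : e \in S -> (v e <= vspan S)%MS.
Proof. by move=> eS; rewrite -genmxE (sumsmx_sup e). Qed.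

Lemma vspanS (S S' : {set E}) : S \subset S' -> (vspan S <= vspan S')%MS.
Proof. by move=> /subsetP sS; apply/vspan_subP => e /sS; apply: mem_vspan. Qed.

Lemma vspan_sub_kermx p (c : 'M[F]_(n, p)) (S : {set E}) :
  (vspan S <= kermx c)%MS = [forall e in S, v e *m c == 0].
Proof.
apply/vspan_subP/forall_inP => H e eS; first by rewrite -sub_kermx H.
by rewrite sub_kermx H.
Qed.

Lemma vspan0 : vspan set0 = 0.
Proof. by rewrite /vspan big_pred0 // => e; rewrite inE. Qed.

Lemma vspan_setU1 e (S : {set E}) : (vspan (e |: S) :=: <<v e>> + vspan S)%MS.
Proof.
apply/eqmxP/andP; split.
  apply/vspan_subP => f; rewrite !inE => /orP[/eqP->|fS].
    by rewrite -genmxE addsmxSl.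
  by apply: submx_trans (addsmxSr _ _); apply: mem_vspan.
by rewrite addsmx_sub genmxE mem_vspan ?setU11 //= vspanS // subsetUr.
Qed.

Lemma vspan_setU1_id e (S : {set E}) :
  (v e <= vspan S)%MS -> (vspan (e |: S) :=: vspan S)%MS.
Proof.
move=> H; apply: eqmx_trans (vspan_setU1 e S) _.
by apply/eqmxP; rewrite addsmx_sub genmxE H submx_refl addsmxSr.
Qed.

Lemma vrank_setU1_new e (S : {set E}) :
  ~~ (v e <= vspan S)%MS -> vrank (e |: S) = (vrank S).+1.
Proof.
move=> H; apply/eqP; rewrite eqn_leq; apply/andP; split.
  rewrite /vrank (vspan_setU1 e S); apply: leq_trans (mxrank_adds_leqif _ _) _.
  by rewrite mxrank_gen rank_rV addnC -[X in (_ <= X)%N]addn1 leq_add2l leq_b1.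
apply: rank_ltmx; rewrite ltmxE vspanS ?subsetUr //=.
by apply: contra H => H; apply: submx_trans H; apply: mem_vspan; rewrite setU11.
Qed.

Definition toggle (S : {set E}) e := if e \in S then S :\ e else e |: S.

Lemma in_toggle (S : {set E}) e f :
  (f \in toggle S e) = if f == e then e \notin S else f \in S.
Proof.
rewrite /toggle; case: ifP => eS; rewrite !inE; case: eqP => // ->; by rewrite eS.
Qed.

Lemma toggleK e : involutive (toggle^~ e).
Proof.
move=> S; apply/setP => f; rewrite !in_toggle eqxx negbK.
by case: (f =P e) => [->|].
Qed.

Lemma sign_toggle (S : {set E}) e : (-1) ^+ #|toggle S e| = - (-1) ^+ #|S| :> int.
Proof.
rewrite /toggle; case: ifP => eS.
  by rewrite [in RHS](cardsD1 e S) eS exprS mulN1r opprK.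
by rewrite cardsU1 eS exprS mulN1r.
Qed.

Lemma vspan_toggle e (S : {set E}) :
  (v e <= vspan (S :\ e))%MS -> (vspan (toggle S e) :=: vspan S)%MS.
Proof.
move=> H; rewrite /toggle; case: ifP => eS.
  by apply: eqmx_sym; rewrite -{1}(setD1K eS); apply: vspan_setU1_id.
have -> : S = S :\ e by apply/setP=> f; rewrite !inE; case: eqP => // ->; rewrite eS.
exact: vspan_setU1_id.
Qed.

End VectorSpan.

(* Whitney's NBC theorem, in the form of a sign-reversing involution. *)
Section NoBrokenCircuit.
Variables (F : fieldType) (E : finType) (n : nat) (v : E -> 'rV[F]_n).
Variables (key : E -> nat) (key_inj : injective key) (G : {set E}).

Definition above e (S : {set E}) := [set f in S | (key e < key f)%N].
Definition breaks (S : {set E}) e := (e \in G) && (v e <= vspan v (above e S))%MS.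
Definition nbc (S : {set E}) := [forall e, ~~ breaks S e].

Lemma breaks_vspan (S : {set E}) e : breaks S e -> (v e <= vspan v (S :\ e))%MS.
Proof.
case/andP=> _ H; apply: submx_trans H _; apply: vspanS; apply/subsetP => f.
by rewrite !inE => /andP[fS ef]; rewrite fS andbT; apply/eqP => fe; rewrite fe ltnn in ef.
Qed.

Lemma breaks_toggle (S : {set E}) e0 e :
  breaks S e0 -> breaks (toggle S e0) e = breaks S e.
Proof.
move=> b0; rewrite /breaks; congr (_ && _).
case: (leqP (key e0) (key e)) => He.
  congr (_ <= _)%MS; congr (vspan v _); apply/setP => f; rewrite !inE in_toggle.
  by case: eqP => // ->; rewrite ltnNge He !andbF.
have -> : above e (toggle S e0) = toggle (above e S) e0.
  apply/setP => f; rewrite !inE !in_toggle !inE; case: eqP => [->|//].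
  by rewrite He !andbT.
suff H : (v e0 <= vspan v (above e S :\ e0))%MS by rewrite (vspan_toggle H).
case/andP: b0 => _ H; apply: submx_trans H _; apply: vspanS; apply/subsetP => f.
rewrite !inE => /andP[fS ef]; rewrite fS (ltn_trans He ef) /= andbT.
by apply/eqP => fe; rewrite fe ltnn in ef.
Qed.

Definition first_break (S : {set E}) :=
  [pick e | breaks S e && [forall f, breaks S f ==> (key e <= key f)%N]].

Lemma first_break_toggle (S : {set E}) e0 :
  breaks S e0 -> first_break (toggle S e0) = first_break S.
Proof.
move=> b0; apply: eq_pick => e; rewrite breaks_toggle //; congr (_ && _).
by apply: eq_forallb => f; rewrite breaks_toggle.
Qed.

Lemma first_break_breaks (S : {set E}) e : first_break S = Some e -> breaks S e.
Proof. by rewrite /first_break; case: pickP => [f /andP[bf _] [<-]|]. Qed.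

Lemma first_breakN (S : {set E}) : (first_break S == None) = nbc S.
Proof.
rewrite /first_break; case: pickP => [e /andP[be _]|H] /=.
  by apply/esym/negP => /forallP/(_ e); rewrite be.
apply/esym/forallP => e; apply/negP => be.
case: (@arg_minnP _ e (breaks S) key be) => f bf min.
move: (H f); rewrite bf /= => /negP; apply; apply/forall_inP => g; exact: min.
Qed.

Definition nbc_switch (S : {set E}) :=
  if first_break S is Some e then toggle S e else S.

Lemma nbc_switchK : involutive nbc_switch.
Proof.
move=> S; rewrite /nbc_switch; case E1: (first_break S) => [e|]; last by rewrite E1.
by rewrite first_break_toggle ?E1 ?toggleK //; apply: first_break_breaks.
Qed.

Lemma nbc_switch_invariants (S : {set E}) e :
  first_break S = Some e ->
  [/\ (vspan v (nbc_switch S) :=: vspan v S)%MS,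
      (nbc_switch S \subset G) = (S \subset G),
      nbc (nbc_switch S) = nbc S &
      (-1) ^+ #|nbc_switch S| = - (-1) ^+ #|S| :> int].
Proof.
rewrite /nbc_switch => E1; rewrite E1; have be := first_break_breaks E1.
split; [exact: vspan_toggle (breaks_vspan be) | | | exact: sign_toggle].
  have eG : e \in G by case/andP: be.
  apply/idP/idP => /subsetP H; apply/subsetP => f fS.
    by have := H f; rewrite in_toggle; case: eqP => [->|_]; last by apply.
  by move: fS; rewrite in_toggle; case: eqP => [->|_ /H].
by apply: eq_forallb => f; rewrite breaks_toggle.
Qed.

Lemma nbc_sub (S S' : {set E}) : S' \subset S -> nbc S -> nbc S'.
Proof.
move=> sS /forallP gS; apply/forallP => e; apply: contra (gS e).
case/andP => eG H; rewrite /breaks eG; apply: submx_trans H _; apply: vspanS.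
by apply/subsetP => f; rewrite !inE => /andP[/(subsetP sS) -> ->].
Qed.

Lemma nbc_vrank (S : {set E}) : S \subset G -> nbc S -> vrank v S = #|S|.
Proof.
have [k] := ubnP #|S|; elim: k S => // k IH S.
have [->|[e0 e0S]] := set_0Vmem S; first by rewrite /vrank vspan0 mxrank0 cards0.
case: (@arg_minnP _ e0 (mem S) key e0S) => e /= eS min Hk sG gS.
have above_min : above e S = S :\ e.
  apply/setP => f; rewrite !inE; apply/andP/andP => [[fS ef]|[ef fS]]; split => //.
    by apply/eqP => fe; rewrite fe ltnn in ef.
  rewrite ltn_neqAle min // andbT; apply: contra ef => /eqP kf.
  by rewrite (key_inj kf).
have new : ~~ (v e <= vspan v (S :\ e))%MS.
  by move/forallP: gS => /(_ e); rewrite /breaks (subsetP sG e eS) above_min.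
rewrite -(setD1K eS) vrank_setU1_new // IH.
- by rewrite cardsU1 !inE eqxx.
- by move: Hk; rewrite (cardsD1 e S) eS.
- by apply: subset_trans sG; apply: subsetDl.
- by apply: nbc_sub gS; apply: subsetDl.
Qed.

Lemma signed_rank_sum_nbc (P : {set E} -> bool) :
  (forall (S : {set E}) e, S \subset G -> breaks S e -> P (toggle S e) = P S) ->
  forall i : nat,
  \sum_(S : {set E} | (S \subset G) && P S && (vrank v S == i)) (-1) ^+ #|S|
  = (-1) ^+ i * #|[set S : {set E} | (S \subset G) && P S && nbc S && (#|S| == i)]|%:Z
  :> int.
Proof.
move=> HP i; rewrite (bigID nbc) /=.
set Q := fun S : {set E} => (S \subset G) && P S && (vrank v S == i) && ~~ nbc S.
have Qswitch S : Q (nbc_switch S) = Q S.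
  rewrite /Q; case E1: (first_break S) => [e|]; last by rewrite /nbc_switch E1.
  have [sp -> -> _] := nbc_switch_invariants E1; rewrite /vrank sp.
  case sG: (S \subset G) => //=; rewrite /nbc_switch E1 HP //.
  exact: first_break_breaks.
have -> : \sum_(S | Q S) (-1) ^+ #|S| = 0 :> int.
  set X := \sum_(S | Q S) _; suff : X = - X by lia.
  rewrite {1}/X (reindex_inj (can_inj nbc_switchK)) /= /X -sumrN.
  apply: eq_big => S; first by rewrite Qswitch.
  case E1: (first_break S) => [e|] QS; first by case: (nbc_switch_invariants E1).
  by move: QS; rewrite Qswitch /Q /= -first_breakN E1 andbF.
rewrite addr0 (eq_bigr (fun=> (-1) ^+ i)); last first.
  by move=> S /andP[/andP[/andP[sG _] /eqP <-] gS]; rewrite nbc_vrank.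
rewrite (eq_bigl (fun S => S \in [set S : {set E} | (S \subset G) && P S && nbc S && (#|S| == i)])).
  by rewrite sumr_const -mulr_natr natz.
move=> S; rewrite inE; case sG: (S \subset G); case gS: (nbc S); rewrite ?andbF ?andbT //=.
by rewrite nbc_vrank.
Qed.

End NoBrokenCircuit.

(* Families of nonempty subsets of [m] that separate the points of [m]
   (together with a virtual point lying in no subset), through the 0/1
   indicator vectors of their members. *)
Section SeparatingFamilies.
Variables (F : fieldType) (m : nat).

Definition indicator (J : {set 'I_m}) : 'rV[F]_m :=
  \row_(j < m) (if j \in J then 1 else 0).
Definition nonempty_sets := [set J : {set 'I_m} | J != set0].

Definition separating (T : {set {set 'I_m}}) :=
  [forall j : 'I_m, exists J in T, j \in J] &&
  [forall j : 'I_m, forall j' : 'I_m,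
     (j != j') ==> [exists J in T, (j \in J) != (j' \in J)]].

Definition coord_col (j : 'I_m) : 'cV[F]_m := delta_mx j 0.

Lemma indicator_coord (J : {set 'I_m}) j :
  (indicator J *m coord_col j == 0) = (j \notin J).
Proof.
rewrite /coord_col -colE; apply/eqP/idP => [/matrixP/(_ 0 0)|]; rewrite ?mxE.
  by case: (j \in J) => //; move/eqP; rewrite oner_eq0.
by move=> /negPf H; apply/matrixP => a b; rewrite !mxE H.
Qed.

Lemma indicator_coord_diff (J : {set 'I_m}) j j' :
  (indicator J *m (coord_col j - coord_col j') == 0) = ((j \in J) == (j' \in J)).
Proof.
rewrite /coord_col mulmxBr -!colE subr_eq0.
apply/eqP/eqP => [/matrixP/(_ 0 0)|]; rewrite ?mxE; last first.
  by move=> H; apply/matrixP => a b; rewrite !mxE H.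
by case: (j \in J); case: (j' \in J) => //; move/eqP;
  rewrite ?oner_eq0 // eq_sym oner_eq0.
Qed.

Lemma separating_vspan (T : {set {set 'I_m}}) :
  separating T =
    [forall j : 'I_m, ~~ (vspan indicator T <= kermx (coord_col j))%MS] &&
    [forall j : 'I_m, forall j' : 'I_m, (j != j') ==>
       ~~ (vspan indicator T <= kermx (coord_col j - coord_col j'))%MS].
Proof.
congr (_ && _); apply: eq_forallb => j.
  rewrite vspan_sub_kermx negb_forall_in; apply: eq_existsb => J.
  by rewrite indicator_coord negbK.
apply: eq_forallb => j'; congr (_ ==> _).
rewrite vspan_sub_kermx negb_forall_in; apply: eq_existsb => J.
by rewrite indicator_coord_diff.
Qed.

Lemma separating_eqmx (T T' : {set {set 'I_m}}) :
  (vspan indicator T :=: vspan indicator T')%MS -> separating T = separating T'.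
Proof.
move=> H; rewrite !separating_vspan; congr (_ && _).
  by apply: eq_forallb => j; rewrite H.
by apply: eq_forallb => j; apply: eq_forallb => j'; rewrite H.
Qed.

Definition sep_signed_sum (i : nat) : int :=
  \sum_(T : {set {set 'I_m}} | (T \subset nonempty_sets) && separating T &&
                               (vrank indicator T == i)) (-1) ^+ #|T|.

Definition nbc_sep_count (key : {set 'I_m} -> nat) (i : nat) :=
  #|[set T : {set {set 'I_m}} | (T \subset nonempty_sets) && separating T &&
        nbc indicator key nonempty_sets T && (#|T| == i)]|.

Lemma sep_signed_sum_nbc key : injective key -> forall i,
  sep_signed_sum i = (-1) ^+ i * (nbc_sep_count key i)%:Z.
Proof.
move=> key_inj i; rewrite /sep_signed_sum (signed_rank_sum_nbc key_inj) //.
move=> S e _ be; apply: separating_eqmx; apply: vspan_toggle.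
exact: breaks_vspan be.
Qed.

Lemma nbc_sep_count_key k1 k2 : injective k1 -> injective k2 ->
  forall i, nbc_sep_count k1 i = nbc_sep_count k2 i.
Proof.
move=> i1 i2 i; have := sep_signed_sum_nbc i1 i.
rewrite (sep_signed_sum_nbc i2) => /(congr1 ( *%R ((-1) ^+ i))).
by rewrite !signrMK => /eqP; rewrite eqz_nat => /eqP.
Qed.

(* An independent family in F^m has at most m members. *)
Lemma nbc_sep_count_small key : injective key ->
  forall i, (m < i)%N -> nbc_sep_count key i = 0%N.
Proof.
move=> key_inj i lt; apply/eqP; rewrite cards_eq0; apply/eqP/setP => T.
rewrite !inE; apply/negP => /andP[/andP[/andP[sG _] gT] /eqP cT].
have := rank_leq_col (vspan indicator T).
by rewrite -/(vrank _ T) (nbc_vrank key_inj sG gT) cT leqNgt lt.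
Qed.

(* The points of [m] get pairwise distinct nonempty "membership patterns"
   inside a separating family T, so m < 2^|T|. *)
Lemma separating_card (T : {set {set 'I_m}}) : separating T -> (m < 2 ^ #|T|)%N.
Proof.
case/andP => /forallP cover /forallP apart.
pose pattern (j : 'I_m) := [set J in T | j \in J].
have pattern_inj : injective pattern.
  move=> j j' pj; apply/eqP; apply/negP => /negP ne.
  have /exists_inP [J JT HJ] := implyP (forallP (apart j) j') ne.
  by move/setP: pj => /(_ J); rewrite !inE JT /= => HH; rewrite HH eqxx in HJ.
have sub : pattern @: setT \subset powerset T :\ set0.
  apply/subsetP => _ /imsetP[j _ ->]; rewrite !inE; apply/andP; split.
    by apply/set0Pn; have /exists_inP [J JT jJ] := cover j; exists J; rewrite inE JT.
  by apply/subsetP => J; rewrite inE => /andP[].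
have card_sub : #|powerset T :\ set0| = (2 ^ #|T|).-1.
  by rewrite -card_powerset [in RHS](cardsD1 set0) inE sub0set.
have := subset_leq_card sub; rewrite card_imset // cardsT card_ord card_sub.
by rewrite -ltnS prednK ?expn_gt0.
Qed.

Lemma nbc_sep_count_large key i : (2 ^ i <= m)%N -> nbc_sep_count key i = 0%N.
Proof.
move=> le; apply/eqP; rewrite cards_eq0; apply/eqP/setP => T; rewrite !inE.
apply/negP => /andP[/andP[/andP[_ sT] _] /eqP cT].
by have := separating_card sT; rewrite cT ltnNge le.
Qed.

End SeparatingFamilies.

(* Upper bound: ordering the i members of a separating family and reading the
   result column-wise encodes it as an injection from [m] into the nonempty
   subsets of [i]. *)
Section CountBound.
Variables (F : fieldType) (m i : nat).
Local Open Scope nat_scope.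

Definition sep_families :=
  [set T : {set {set 'I_m}} | separating T && (#|T| == i)].

Definition sep_tuples :=
  [set f : {ffun 'I_i -> {set 'I_m}} | injectiveb f && separating [set f t | t : 'I_i]].

Lemma card_nonempty_sets : #|nonempty_sets i| = 2 ^ i - 1.
Proof.
have -> : nonempty_sets i = [set~ set0] by apply/setP => P; rewrite !inE.
by rewrite cardsC1 -cardsT -powersetT card_powerset cardsT card_ord subn1.
Qed.

Lemma card_sep_tuples : #|sep_tuples| = #|sep_families| * i`!.
Proof.
pose image (f : {ffun 'I_i -> {set 'I_m}}) := [set f t | t : 'I_i].
rewrite -sum1_card (partition_big image (mem sep_families)) /=; last first.
  move=> f; rewrite inE => /andP[/injectiveP fi sf].
  by rewrite inE sf card_imset // card_ord eqxx.
rewrite -sum_nat_const; apply: eq_bigr => T; rewrite inE => /andP[sT /eqP cT].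
have -> : i`! = #|[set f : {ffun 'I_i -> {set 'I_m}} in ffun_on (mem T) | injectiveb f]|.
  by rewrite card_inj_ffuns_on card_ord -ffactnn -cT.
rewrite sum1_card; apply: eq_card => f; rewrite -topredE /= !inE; apply/andP/andP => [[/andP[fi _] /eqP <-]|].
  by split => //; apply/ffun_onP => t; apply: imset_f.
move=> [/ffun_onP fT /injectiveP fi].
have image_f : [set f t | t : 'I_i] = T.
  apply/eqP; rewrite eqEcard cT card_imset // card_ord leqnn andbT.
  by apply/subsetP => _ /imsetP[t _ ->]; apply: fT.
by rewrite /image image_f sT eqxx andbT; split => //; apply/injectiveP.
Qed.

Lemma card_sep_tuples_le : #|sep_tuples| <= (2 ^ i - 1) ^_ m.
Proof.
pose transpose (f : {ffun 'I_i -> {set 'I_m}}) :=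
  [ffun j : 'I_m => [set t : 'I_i | j \in f t]].
have transpose_inj : injective transpose.
  move=> f g e; apply/ffunP => t; apply/setP => j.
  by move/ffunP: e => /(_ j) /setP /(_ t); rewrite !ffunE !inE.
have -> : (2 ^ i - 1) ^_ m =
    #|[set g : {ffun 'I_m -> {set 'I_i}} in ffun_on (mem (nonempty_sets i)) | injectiveb g]|.
  by rewrite card_inj_ffuns_on card_ord card_nonempty_sets.
rewrite -(card_imset _ transpose_inj); apply: subset_leq_card.
apply/subsetP => _ /imsetP[f + ->]; rewrite !inE => /andP[_ /andP[/forallP cover /forallP apart]].
apply/andP; split.
  apply/ffun_onP => j; rewrite ffunE !inE.
  have /exists_inP [J /imsetP[t _ ->] jJ] := cover j.
  by apply/set0Pn; exists t; rewrite inE.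
apply/injectiveP => j j'; rewrite !ffunE => e; apply/eqP; apply/negP => /negP ne.
have /exists_inP [J /imsetP[t _ ->] HJ] := implyP (forallP (apart j) j') ne.
by move/setP: e => /(_ t); rewrite !inE => HH; rewrite HH eqxx in HJ.
Qed.

Lemma nbc_sep_count_bound key :
  @nbc_sep_count F m key i * i`! <= (2 ^ i - 1) ^_ m.
Proof.
apply: leq_trans card_sep_tuples_le; rewrite card_sep_tuples leq_mul2r.
apply/orP; right; apply: subset_leq_card; apply/subsetP => T; rewrite !inE.
by case/andP => /andP[/andP[_ ->] _] ->.
Qed.

End CountBound.

Section CountPositive.
Variables (F : fieldType) (m : nat).
Local Open Scope nat_scope.

Lemma exists_key_first (X : finType) (T : {set X}) :
  exists2 key : X -> nat, injective key &
    forall J J', J \in T -> J' \notin T -> key J < key J'.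
Proof.
pose N := #|X|.
exists (fun J => if J \in T then enum_rank J : nat else N + enum_rank J).
  move=> J J'; have := ltn_ord (enum_rank J); have := ltn_ord (enum_rank J').
  rewrite -/N; case: (J \in T); case: (J' \in T) => hJ' hJ e;
    try by move: e hJ hJ'; lia.
    by apply: enum_rank_inj; apply: val_inj.
  by apply: enum_rank_inj; apply: val_inj; apply: (addnI e).
by move=> J J' -> /negPf ->; apply: leq_trans (ltn_ord _) (leq_addr _ _).
Qed.

(* A family whose members all come first and each have a private point is NBC:
   the coordinate of the private point of J vanishes on the other members. *)
Lemma nbc_private_points (T : {set {set 'I_m}}) (key : {set 'I_m} -> nat) :
  (forall J, J \in T -> exists2 j, j \in J & forall J', J' \in T -> j \in J' -> J' = J) ->
  (forall J J', J \in T -> J' \notin T -> key J < key J') ->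
  nbc (indicator F (m:=m)) key (nonempty_sets m) T.
Proof.
move=> private first; apply/forallP => e; rewrite /breaks negb_and.
case eT: (e \in T).
  have [j je jpriv] := private e eT; apply/orP; right; apply/negP => H.
  have : (vspan (indicator F (m:=m)) (above key e T) <= kermx (coord_col F j))%MS.
    rewrite vspan_sub_kermx; apply/forall_inP => f; rewrite !inE => /andP[fT ef].
    rewrite indicator_coord; apply/negP => jf.
    by move: ef; rewrite (jpriv f fT jf) ltnn.
  by move=> /(submx_trans H); rewrite sub_kermx indicator_coord je.
have -> : above key e T = set0.
  apply/setP => f; rewrite !inE; apply/negP => /andP[fT].
  by rewrite ltnNge ltnW // first // eT.
rewrite vspan0 submx0 inE; case: (set_0Vmem e) => [->|[x xe]]; first by rewrite eqxx.
apply/orP; right; apply/eqP => /matrixP/(_ ord0 x); rewrite !mxE xe => /eqP.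
by rewrite oner_eq0.
Qed.

Section Code.
Variables (i : nat) (i_le_m : i <= m).

Lemma exists_code : m < 2 ^ i ->
  exists code : 'I_m -> {set 'I_i},
    [/\ injective code, forall j, code j != set0 &
        forall t, code (widen_ord i_le_m t) = [set t]].
Proof.
move=> m_small.
set singletons := [seq [set t] | t <- enum 'I_i].
set s := singletons ++ [seq P <- enum {set 'I_i} | (P != set0) && (P \notin singletons)].
have s_uniq : uniq s.
  rewrite cat_uniq map_inj_uniq ?enum_uniq //=; last exact: set1_inj.
  rewrite filter_uniq ?enum_uniq // andbT.
  by apply/hasPn => P; rewrite mem_filter => /andP[/andP[_ H] _].
have mem_s P : (P \in s) = (P != set0).
  rewrite mem_cat mem_filter mem_enum andbT.
  case: (boolP (P \in singletons)) => [/mapP[t _ ->]|_] /=; last by rewrite andbT.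
  by apply/esym/set0Pn; exists t; rewrite inE.
have size_s : size s = 2 ^ i - 1.
  rewrite -(card_uniqP s_uniq) -card_nonempty_sets; apply: eq_card => P.
  by rewrite mem_s inE.
have m_le : m <= size s by rewrite size_s -ltnS subn1 prednK ?expn_gt0.
exists (fun j => nth set0 s j); split.
- move=> j j' /eqP; rewrite nth_uniq ?(leq_trans (ltn_ord _)) // => /eqP.
  exact: val_inj.
- by move=> j; rewrite -mem_s mem_nth // (leq_trans (ltn_ord j)).
- move=> t; rewrite /= nth_cat size_map size_enum_ord ltn_ord.
  by rewrite (nth_map t) ?size_enum_ord // nth_ord_enum.
Qed.

(* The columns of a code form a separating family of size i in which every
   member has a private point, hence an NBC one once its members come first. *)
Lemma nbc_sep_count_pos : m < 2 ^ i ->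
  exists2 key, injective key & 0 < @nbc_sep_count F m key i.
Proof.
move=> /exists_code [code [code_inj code_ne code_sing]].
pose w (t : 'I_i) := widen_ord i_le_m t.
pose column (t : 'I_i) := [set j : 'I_m | t \in code j].
have w_column t t' : (w t \in column t') = (t' == t) by rewrite inE code_sing inE.
have column_inj : injective column.
  by move=> t t' e; apply/eqP; rewrite -w_column e w_column.
set T := column @: setT.
have [key key_inj first] := exists_key_first T.
exists key => //; rewrite lt0n cards_eq0; apply/set0Pn; exists T.
rewrite !inE card_imset // cardsT card_ord eqxx andbT -andbA; apply/and3P; split.
- apply/subsetP => _ /imsetP[t _ ->]; rewrite inE; apply/set0Pn.
  by exists (w t); rewrite w_column.
- apply/andP; split.
    apply/forallP => j; have /set0Pn [t tj] := code_ne j.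
    by apply/exists_inP; exists (column t); rewrite ?imset_f // inE.
  apply/forallP => j; apply/forallP => j'; apply/implyP => ne.
  have [t Ht] : exists t, (t \in code j) != (t \in code j').
    apply/existsP; apply: contraR ne => /existsPn H.
    by apply/eqP; apply: code_inj; apply/setP => t; move/negbNE: (H t) => /eqP.
  by apply/exists_inP; exists (column t); rewrite ?imset_f // !inE.
- apply: nbc_private_points first => _ /imsetP[t _ ->].
  exists (w t); first by rewrite w_column.
  by move=> _ /imsetP[t' _ ->]; rewrite w_column => /eqP ->.
Qed.

End Code.
End CountPositive.

Notation RR := Rdefinitions.R.

Lemma indicator_tr n (I : {set 'I_n}) : (indicator RR I)^T = normal_vec I.
Proof. by apply/matrixP => a b; rewrite !mxE. Qed.

Lemma rk_vrank n (S : {set {set 'I_n}}) : rk S = vrank (indicator RR (m:=n)) S.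
Proof.
rewrite /rk.
have sub_cap p (X : 'M[RR]_(p, n)) : (X <= \bigcap_(I in S) hyperplane I)%MS =
    (X <= kermx (vspan (indicator RR (m:=n)) S)^T)%MS.
  rewrite sub_kermx -trmx_eq0 trmx_mul trmxK -sub_kermx vspan_sub_kermx.
  apply/sub_bigcapmxP/forall_inP => H I IS.
    by rewrite -trmx_eq0 trmx_mul trmxK indicator_tr -sub_kermx H.
  by rewrite /hyperplane sub_kermx -indicator_tr -trmx_eq0 trmx_mul trmxK H.
have -> : (\bigcap_(I in S) hyperplane I :=: kermx (vspan (indicator RR (m:=n)) S)^T)%MS.
  by apply/eqmxP/andP; split; [rewrite -sub_cap | rewrite sub_cap]; exact: submx_refl.
by rewrite mxrank_ker mxrank_tr subKn // rank_leq_col.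
Qed.

(* A_n has full rank n: it contains the coordinate hyperplanes. *)
Lemma vrank_resonance n : vrank (indicator RR (m:=n)) (resonance_idx n) = n.
Proof.
apply/eqP; rewrite eqn_leq rank_leq_col /= -{1}(mxrank1 RR n).
apply: mxrankS; apply/row_subP => j.
have -> : row j 1%:M = indicator RR [set j].
  by apply/matrixP => a b; rewrite !mxE inE eq_sym; case: (b == j).
by apply: mem_vspan; rewrite inE; apply/set0Pn; exists j; rewrite inE.
Qed.

Lemma coef_char_poly_res n i : (i <= n)%N ->
  (char_poly_res n)`_(n - i) =
  \sum_(S : {set {set 'I_n}} | (S \subset resonance_idx n) &&
                               (vrank (indicator RR (m:=n)) S == i)) (-1) ^+ #|S|.
Proof.
move=> le; rewrite /char_poly_res coef_sum.
rewrite big_mkcond [RHS]big_mkcond /=; apply: eq_bigr => S _.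
rewrite coefZ coefXn !rk_vrank vrank_resonance inE.
case: (S \subset resonance_idx n) => //=.
have : (vrank (indicator RR (m:=n)) S <= n)%N by exact: rank_leq_col.
move: (vrank _ S) => r le_r; have -> : (n - i == n - r)%N = (r == i).
  by apply/eqP/eqP; lia.
by case: eqP; rewrite ?mulr1 ?mulr0.
Qed.

(* Decomposition of the signed rank sum of A_n along the partition of
   [n+1] = [n] + {extra point} cut out by a subarrangement S: two points are
   equivalent when every I in S contains both or neither of them, the extra
   point (ord_max) belonging to no I. *)
Definition pattern n (I : {set 'I_n}) (x : 'I_n.+1) : bool :=
  if unlift ord_max x is Some y then y \in I else false.

Lemma pattern_lift n (I : {set 'I_n}) y : pattern I (lift ord_max y) = (y \in I).
Proof. by rewrite /pattern liftK. Qed.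

Lemma pattern_max n (I : {set 'I_n}) : pattern I ord_max = false.
Proof. by rewrite /pattern unlift_none. Qed.

Definition pattern_partition n (S : {set {set 'I_n}}) :=
  preim_partition (fun x => [set I in S | pattern I x]) [set: 'I_n.+1].

Lemma preim_partition_eq (T rT : finType) (f : T -> rT) (P : {set {set T}}) :
  partition P [set: T] ->
  (preim_partition f [set: T] == P) =
    [forall x, forall y, (f x == f y) == (pblock P x == pblock P y)].
Proof.
move=> hP; apply/eqP/forallP => [<- x|H].
  apply/forallP => y; have hP' := preim_partitionP f [set: T].
  rewrite eq_pblock ?(partition_trivIset hP') ?(cover_partition hP') ?inE //.
  by rewrite pblock_equivalence_partition ?inE //; split => // /eqP ->.
rewrite -[in RHS](preim_partition_pblock hP); apply/setP => B.
rewrite /preim_partition /equivalence_partition.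
by apply/imsetP/imsetP => [[x _ ->]|[x _ ->]]; exists x => //; apply/setP => y;
  rewrite !inE (eqP (forallP (H x) y)).
Qed.

Lemma set_eq_sep (X : finType) (S : {set X}) (p q : X -> bool) :
  ([set I in S | p I] == [set I in S | q I]) = [forall I in S, p I == q I].
Proof.
apply/eqP/forall_inP => [/setP H I IS|H]; first by have := H I; rewrite !inE IS /= => ->.
by apply/setP => I; rewrite !inE; case IS: (I \in S) => //=; apply/eqP; apply: H.
Qed.

Section PatternFiber.
Variables (F : fieldType) (n : nat) (P : {set {set 'I_n.+1}}).
Hypothesis hP : partition P [set: 'I_n.+1].

Definition zero_block := pblock P ord_max.
Definition blocks := P :\ zero_block.
Definition nblocks := #|blocks|.
Definition block (b : 'I_nblocks) : {set 'I_n.+1} := @enum_val _ (pred_of_set blocks) b.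

Let P_cover : cover P = [set: 'I_n.+1]. Proof. exact: cover_partition hP. Qed.
Let P_triv : trivIset P. Proof. exact: partition_trivIset hP. Qed.

Lemma nblocksE : nblocks = (#|P| - 1)%N.
Proof.
rewrite /nblocks /blocks (cardsD1 zero_block P) pblock_mem ?P_cover ?inE //.
by rewrite add1n subn1.
Qed.

Lemma block_in b : block b \in P.
Proof. by have := enum_valP b; rewrite /block !inE => /andP[]. Qed.
Lemma block_neq_zero b : block b != zero_block.
Proof. by have := enum_valP b; rewrite /block !inE => /andP[]. Qed.
Lemma block_inj : injective block.
Proof. exact: enum_val_inj. Qed.
Lemma pblock_block b x : x \in block b -> pblock P x = block b.
Proof. by move=> xb; apply: def_pblock P_triv (block_in b) xb. Qed.
Lemma block_disj b b' x : x \in block b -> x \in block b' -> b = b'.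
Proof. by move=> h1 h2; apply: block_inj; rewrite -(pblock_block h1) (pblock_block h2). Qed.
Lemma max_notin_block b : ord_max \notin block b.
Proof.
by apply/negP => /pblock_block h; have := block_neq_zero b; rewrite /zero_block h eqxx.
Qed.
Lemma block_neq0 b : block b != set0.
Proof. exact: partition_neq0 hP (block_in b). Qed.
Lemma pblock_zero x : x \in zero_block -> pblock P x = zero_block.
Proof. by move=> xd; apply: def_pblock P_triv _ xd; apply: pblock_mem; rewrite P_cover. Qed.
Lemma zero_notin_block x b : x \in zero_block -> x \notin block b.
Proof.
move=> xd; apply/negP => /pblock_block; rewrite pblock_zero // => h.
by have := block_neq_zero b; rewrite h eqxx.
Qed.

Definition block_index (x : 'I_n.+1) : option 'I_nblocks := [pick b | x \in block b].

Lemma block_index_block b x : x \in block b -> block_index x = Some b.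
Proof.
move=> xb; rewrite /block_index; case: pickP => [b' xb'|/(_ b)]; last by rewrite xb.
by rewrite (block_disj xb xb').
Qed.

Lemma block_index_zero x : x \in zero_block -> block_index x = None.
Proof.
move=> xd; rewrite /block_index; case: pickP => // b xb.
by have := zero_notin_block b xd; rewrite xb.
Qed.

Lemma block_indexP x :
  (x \in zero_block /\ block_index x = None) \/
  (exists2 b, x \in block b & block_index x = Some b).
Proof.
case: (boolP (x \in zero_block)) => xd; first by left; rewrite block_index_zero.
have xpb : x \in pblock P x by rewrite mem_pblock P_cover inE.
have pbx : pblock P x \in blocks.
  rewrite !inE pblock_mem ?P_cover ?inE // andbT.
  by apply: contra xd => /eqP <-.
have xb : x \in block (enum_rank_in pbx (pblock P x)) by rewrite /block enum_rankK_in.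
by right; exists (enum_rank_in pbx (pblock P x)); last apply: block_index_block.
Qed.

Lemma pblock_eq_index x y : (pblock P x == pblock P y) = (block_index x == block_index y).
Proof.
have pbE z : pblock P z = if block_index z is Some b then block b else zero_block.
  by case: (block_indexP z) => [[zd ->]|[b zb ->]]; [exact: pblock_zero | exact: pblock_block].
rewrite !pbE; case: (block_index x) => [b|]; case: (block_index y) => [b'|] //=.
- by apply/eqP/eqP => [/block_inj ->|[->]].
- by rewrite (negbTE (block_neq_zero b)).
- by rewrite eq_sym (negbTE (block_neq_zero b')).
- by rewrite !eqxx.
Qed.

Lemma block_index_surj (o : option 'I_nblocks) : exists x, block_index x = o.
Proof.
case: o => [b|]; last by exists ord_max; apply: block_index_zero; rewrite mem_pblock P_cover inE.
by have /set0Pn [x xb] := block_neq0 b; exists x; apply: block_index_block.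
Qed.

Definition expand (J : {set 'I_nblocks}) : {set 'I_n} :=
  [set y : 'I_n | [exists b in J, lift ord_max y \in block b]].

Definition in_opt (o : option 'I_nblocks) (J : {set 'I_nblocks}) :=
  if o is Some b then b \in J else false.

Lemma pattern_expand J x : pattern (expand J) x = in_opt (block_index x) J.
Proof.
rewrite /pattern; case: unliftP => [y ->|->]; last first.
  by rewrite block_index_zero // mem_pblock P_cover inE.
rewrite inE; case: (block_indexP (lift ord_max y)) => [[xd ->]|[b xb ->]] /=.
  by apply/exists_inP => [[b _ xb]]; have := zero_notin_block b xd; rewrite xb.
apply/exists_inP/idP => [[b' b'J xb']|bJ]; last by exists b.
by rewrite (block_disj xb xb').
Qed.

Lemma expand_inj : injective expand.
Proof.
move=> J J' e; apply/setP => b; have /set0Pn [x xb] := block_neq0 b.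
by have := pattern_expand J x; rewrite e pattern_expand (block_index_block xb).
Qed.

Lemma expand_neq0 J : (expand J != set0) = (J != set0).
Proof.
apply/idP/idP; last first.
  case/set0Pn => b bJ; have /set0Pn [x xb] := block_neq0 b.
  case: (unliftP ord_max x) => [y exy|exy]; last by rewrite exy (negbTE (max_notin_block b)) in xb.
  by apply/set0Pn; exists y; rewrite inE; apply/exists_inP; exists b; rewrite -?exy.
apply: contraNneq => ->; apply/eqP/setP => y; rewrite !inE.
by apply/exists_inP => [[b]]; rewrite inE.
Qed.

Definition block_mx : 'M[F]_(nblocks, n) :=
  \matrix_(b, y) (if lift ord_max y \in block b then 1 else 0).

Lemma indicator_expand J : indicator F (expand J) = indicator F J *m block_mx.
Proof.
apply/matrixP => a y; rewrite !mxE.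
have := pattern_expand J (lift ord_max y); rewrite pattern_lift => ->.
case: (block_indexP (lift ord_max y)) => [[xd ->]|[b0 xb ->]] /=.
  by rewrite big1 // => b _; rewrite !mxE (negbTE (zero_notin_block b xd)) mulr0.
rewrite (bigD1 b0) //= big1 ?addr0 ?mxE ?xb ?mulr1 //.
move=> b nb; rewrite !mxE.
have -> : (lift ord_max y \in block b) = false.
  by apply: contraNF nb => xb'; rewrite (block_disj xb xb').
by rewrite mulr0.
Qed.

(* A right inverse picks one point of [n] in each block. *)
Lemma block_mx_free : row_free block_mx.
Proof.
apply/row_freeP.
exists (\matrix_(y, b) (if [pick y' | lift ord_max y' \in block b] == Some y then 1 else 0)).
apply/matrixP => b b'; rewrite !mxE; under eq_bigr do rewrite !mxE.
case: (pickP (fun y' => lift ord_max y' \in block b')) => [y0 y0b|none]; last first.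
  have /set0Pn [x xb] := block_neq0 b'.
  case: (unliftP ord_max x) => [y exy|exy]; last by rewrite exy (negbTE (max_notin_block b')) in xb.
  by have := none y; rewrite -exy xb.
rewrite (bigD1 y0) //= big1 ?addr0; last first.
  by move=> y ny; case: eqP => [[e]|]; [rewrite e eqxx in ny | rewrite mulr0].
rewrite eqxx mulr1; case: ifP => [h|]; first by rewrite (block_disj h y0b) eqxx.
by case: eqP => // ->; rewrite y0b.
Qed.

Lemma vrank_expand (T : {set {set 'I_nblocks}}) :
  vrank (indicator F (m:=n)) (expand @: T) = vrank (indicator F (m:=nblocks)) T.
Proof.
rewrite /vrank -(mxrankMfree _ block_mx_free); apply: eqmx_rank.
rewrite /vspan big_imset /=; last by move=> J J' _ _; apply: expand_inj.
apply/andP; split.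
  apply/sumsmx_subP => J JT; rewrite genmxE indicator_expand; apply: submxMr.
  exact: mem_vspan.
rewrite (sumsmxMr_gen _ _ block_mx); apply/sumsmx_subP => J JT.
rewrite (sumsmx_sup J) // !genmxE.
by rewrite (eqmxMr block_mx (genmxE (indicator F J))) indicator_expand submx_refl.
Qed.

Lemma separating_opt (T : {set {set 'I_nblocks}}) :
  separating T = [forall o, forall o',
    [forall J in T, in_opt o J == in_opt o' J] == (o == o')].
Proof.
apply/idP/idP => [/andP[/forallP cover /forallP apart]|/forallP H].
  apply/forallP => o; apply/forallP => o'.
  case: o => [b|]; case: o' => [b'|] /=; last by rewrite eqxx eqb_id; apply/forall_inP.
  - case: (eqVneq b b') => [->|ne]; first by rewrite eqxx eqb_id; apply/forall_inP.
    rewrite (_ : (Some b == Some b') = false) ?eqbF_neg; last by apply/eqP => [[]]; apply/eqP.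
    have /exists_inP [J JT HJ] := implyP (forallP (apart b) b') ne.
    by apply/negP => /forall_inP /(_ J JT) /eqP HH; rewrite HH eqxx in HJ.
  - have /exists_inP [J JT HJ] := cover b.
    by rewrite eqbF_neg; apply/negP => /forall_inP /(_ J JT); rewrite HJ.
  - have /exists_inP [J JT HJ] := cover b'.
    by rewrite eqbF_neg; apply/negP => /forall_inP /(_ J JT); rewrite HJ.
apply/andP; split.
  apply/forallP => j; move/forallP: (H (Some j)) => /(_ None) /=.
  rewrite eqbF_neg negb_forall_in => /exists_inP [J JT HJ].
  by apply/exists_inP; exists J => //; move: HJ; case: (j \in J).
apply/forallP => j; apply/forallP => j'; apply/implyP => ne.
move/forallP: (H (Some j)) => /(_ (Some j')) /=.
rewrite (_ : (Some j == Some j') = false); last by apply/eqP => [[]]; apply/eqP.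
rewrite eqbF_neg negb_forall_in => /exists_inP [J JT HJ].
by apply/exists_inP; exists J.
Qed.

Lemma forall_expand (T : {set {set 'I_nblocks}}) (p : {set 'I_n} -> bool) :
  [forall I in expand @: T, p I] = [forall J in T, p (expand J)].
Proof.
apply/forall_inP/forall_inP => H J JT; first by apply: H; apply: imset_f.
by case/imsetP: JT => J' J'T ->; apply: H.
Qed.

Lemma pattern_partitionE (S : {set {set 'I_n}}) :
  (pattern_partition S == P) =
  [forall x, forall y, [forall I in S, pattern I x == pattern I y] ==
                       (block_index x == block_index y)].
Proof.
rewrite /pattern_partition preim_partition_eq //.
by apply: eq_forallb => x; apply: eq_forallb => y; rewrite set_eq_sep pblock_eq_index.
Qed.

Lemma pattern_partition_expand (T : {set {set 'I_nblocks}}) :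
  separating T -> pattern_partition (expand @: T) = P.
Proof.
rewrite separating_opt => sT; apply/eqP; rewrite pattern_partitionE.
apply/forallP => x; apply/forallP => y; rewrite forall_expand.
have -> : [forall J in T, pattern (expand J) x == pattern (expand J) y] =
          [forall J in T, in_opt (block_index x) J == in_opt (block_index y) J].
  by apply: eq_forallb => J; rewrite !pattern_expand.
by move/forallP: sT => /(_ (block_index x)) /forallP /(_ (block_index y)).
Qed.

Lemma expand_preimage (S : {set {set 'I_n}}) :
  pattern_partition S = P -> S = expand @: [set J | expand J \in S].
Proof.
move/eqP; rewrite pattern_partitionE => /forallP H.
have same x y : [forall I in S, pattern I x == pattern I y] = (block_index x == block_index y).
  exact: eqP (forallP (H x) y).
apply/setP => I; apply/idP/idP => [IS|/imsetP[J]]; last by rewrite inE => ? ->.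
pose JI := [set b | [exists y in I, lift ord_max y \in block b]].
suff eI : expand JI = I by rewrite -eI; apply: imset_f; rewrite inE eI.
apply/setP => y; rewrite inE; apply/exists_inP/idP => [[b]|yI].
  rewrite inE => /exists_inP [y' y'I y'b] yb.
  have := same (lift ord_max y) (lift ord_max y').
  rewrite (block_index_block yb) (block_index_block y'b) eqxx => /forall_inP /(_ I IS).
  by rewrite !pattern_lift y'I => /eqP.
case: (block_indexP (lift ord_max y)) => [[yd yN]|[b yb _]].
  have := same (lift ord_max y) ord_max.
  rewrite yN block_index_zero ?mem_pblock ?P_cover ?inE // eqxx => /forall_inP /(_ I IS).
  by rewrite pattern_lift pattern_max yI.
by exists b => //; rewrite inE; apply/exists_inP; exists y.
Qed.

Definition expanded_families :=
  [set expand @: T | T : {set {set 'I_nblocks}} in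
     [set T' : {set {set 'I_nblocks}} | (T' \subset nonempty_sets nblocks) && separating T']].

Lemma pattern_fiber (S : {set {set 'I_n}}) : S \subset resonance_idx n ->
  (pattern_partition S == P) = (S \in expanded_families).
Proof.
move=> sR; apply/eqP/imsetP => [SP|[T]]; last first.
  by rewrite inE => /andP[_ sT] ->; apply: pattern_partition_expand.
have eS := expand_preimage SP; set T := [set J | expand J \in S] in eS.
exists T => //; rewrite inE; apply/andP; split.
  apply/subsetP => J; rewrite !inE -expand_neq0 => JS.
  by move/subsetP: sR => /(_ _ JS); rewrite inE.
rewrite separating_opt; apply/forallP => o; apply/forallP => o'.
have [x <-] := block_index_surj o; have [y <-] := block_index_surj o'.
move/eqP: SP; rewrite pattern_partitionE => /forallP/(_ x)/forallP/(_ y)/eqP <-.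
rewrite [in X in _ == X]eS forall_expand; apply/eqP; apply: eq_forallb => J.
by rewrite !pattern_expand.
Qed.

Lemma fiber_signed_sum i :
  \sum_(S : {set {set 'I_n}} | (S \subset resonance_idx n) &&
        (vrank (indicator F (m:=n)) S == i) && (pattern_partition S == P)) (-1) ^+ #|S|
  = sep_signed_sum F nblocks i.
Proof.
rewrite (eq_bigl (fun S => (S \in expanded_families) && (vrank (indicator F (m:=n)) S == i))); last first.
  move=> S; case sR: (S \subset resonance_idx n) => /=; first by rewrite pattern_fiber // andbC.
  apply/esym/negbTE; apply: contraFN sR => /andP[/imsetP[T + ->] _].
  rewrite inE => /andP[sG _]; apply/subsetP => _ /imsetP[J JT ->].
  by rewrite inE expand_neq0; move/subsetP: sG => /(_ J JT); rewrite inE.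
rewrite big_mkcondr /= big_imset /=; last by move=> T T' _ _; apply/imset_inj/expand_inj.
rewrite /sep_signed_sum [RHS]big_mkcondr /=; apply: eq_big => T; first by rewrite inE.
by move=> _; rewrite vrank_expand card_imset //; apply: expand_inj.
Qed.

End PatternFiber.

Lemma signed_rank_sum_partitions n i :
  \sum_(S : {set {set 'I_n}} | (S \subset resonance_idx n) &&
                               (vrank (indicator RR (m:=n)) S == i)) (-1) ^+ #|S|
  = \sum_(P : {set {set 'I_n.+1}} | partition P [set: 'I_n.+1])
       sep_signed_sum RR (#|P| - 1) i.
Proof.
rewrite (partition_big (@pattern_partition n) (fun P => partition P [set: 'I_n.+1])) /=.
  apply: eq_bigr => P hP; rewrite -(nblocksE hP) -(fiber_signed_sum RR hP i).
  by apply: eq_bigl => S.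
by move=> S _; apply: preim_partitionP.
Qed.

Definition enum_key m (J : {set 'I_m}) : nat := enum_rank J.

Lemma enum_key_inj m : injective (@enum_key m).
Proof. by move=> a b /val_inj/enum_rank_inj. Qed.

Definition betti_coeff (i k : nat) : nat := @nbc_sep_count RR k.-1 (@enum_key _) i.

Lemma sep_signed_sum_coeff m i : sep_signed_sum RR m i = (-1) ^+ i * (betti_coeff i m.+1)%:Z.
Proof. exact: sep_signed_sum_nbc (@enum_key_inj m) i. Qed.

Lemma betti_coeff_zero i k : (0 < k)%N -> (k <= i \/ 2 ^ i < k)%N -> betti_coeff i k = 0%N.
Proof.
case: k => // k _ [le | lt]; first by apply: nbc_sep_count_small; [apply: enum_key_inj | lia].
exact: nbc_sep_count_large.
Qed.

Lemma card_partition_le N (P : {set {set 'I_N}}) : partition P [set: 'I_N] -> (#|P| <= N)%N.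
Proof.
move=> hP; rewrite -[X in (_ <= X)%N]card_ord -cardsT (card_partition hP).
rewrite -sum1_card; apply: leq_sum => A AP; rewrite lt0n cards_eq0.
exact: partition_neq0 hP AP.
Qed.

Lemma stirling2_gt N k : (N < k)%N -> stirling2 N k = 0%N.
Proof.
move=> lt; apply/eqP; rewrite cards_eq0; apply/eqP/setP => P; rewrite !inE.
by apply/negP => /andP[/card_partition_le + /eqP cP]; rewrite cP leqNgt lt.
Qed.

Lemma stirling2_0 N : stirling2 N.+1 0 = 0%N.
Proof.
apply/eqP; rewrite cards_eq0; apply/eqP/setP => P; rewrite !inE.
apply/negP => /andP[hP /eqP /eqP]; rewrite cards_eq0 => /eqP P0.
have := cover_partition hP; rewrite P0 /cover big_set0 => /setP /(_ ord0).
by rewrite !inE.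
Qed.

Lemma sum_by_statistic (T : finType) (A : pred T) (c : T -> nat) (f : nat -> nat) B :
  (forall x, A x -> c x < B)%N ->
  (\sum_(x | A x) f (c x) = \sum_(k < B) f k * #|[set x | A x & c x == k]|)%N.
Proof.
move=> cB.
have split_x x : A x -> f (c x) = (\sum_(k < B) (c x == k) * f k)%N.
  move=> Ax; rewrite (bigD1 (Ordinal (cB x Ax))) //= eqxx mul1n big1 ?addn0 //.
  move=> k nk; rewrite (_ : (c x == k) = false) //; apply/eqP => ek.
  by move/negP: nk; apply; apply/eqP/val_inj.
rewrite (eq_bigr _ split_x) exchange_big /=; apply: eq_bigr => k _.
rewrite -big_distrl /= mulnC; congr (_ * _)%N.
rewrite -sum1_card big_mkcond [RHS]big_mkcond /=; apply: eq_bigr => x _.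
by rewrite inE; case: (A x); case: (c x == k).
Qed.

Lemma sum_ord_support (h : nat -> nat) a b c : (a <= b)%N ->
  (forall k, k < a -> h k = 0)%N -> (forall k, b <= k -> h k = 0)%N ->
  (forall k, c <= k -> h k = 0)%N ->
  (\sum_(k < c) h k = \sum_(a <= k < b) h k)%N.
Proof.
move=> ab ha hb hc.
have zero m1 m2 : (forall k, m1 <= k < m2 -> h k = 0)%N -> (\sum_(m1 <= k < m2) h k = 0)%N.
  by move=> H; rewrite big_nat_cond big1 // => k /andP[hk _]; apply: H.
transitivity (\sum_(0 <= k < b + c) h k)%N.
  rewrite -(big_mkord xpredT) [RHS](big_cat_nat _ (n := c)) ?leq_addl //= (zero c) ?addn0 //.
  by move=> k /andP[hk _]; apply: hc.
rewrite [LHS](big_cat_nat _ (n := a)) //=; last by apply: leq_trans ab (leq_addr _ _).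
rewrite zero ?add0n; last by move=> k /andP[_ hk]; apply: ha.
rewrite [LHS](big_cat_nat _ (n := b)) //=; last by apply: leq_addr.
by rewrite (zero b) ?addn0 // => k /andP[hk _]; apply: hb.
Qed.

Lemma betti_partitions n i : (i <= n)%N ->
  betti n i = (\sum_(P : {set {set 'I_n.+1}} | partition P [set: 'I_n.+1])
                 betti_coeff i #|P|)%N.
Proof.
move=> le; rewrite /betti le coef_char_poly_res // signed_rank_sum_partitions.
set parts := fun P : {set {set 'I_n.+1}} => partition P [set: 'I_n.+1].
have -> : \sum_(P | parts P) sep_signed_sum RR (#|P| - 1) i =
          (-1) ^+ i * (\sum_(P | parts P) betti_coeff i #|P|)%:Z.
  rewrite (big_morph Posz PoszD (erefl _)) big_distrr /=.
  by apply: eq_bigr => P _; rewrite sep_signed_sum_coeff subn1.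
by rewrite abszMsign absz_nat.
Qed.

Lemma betti_formula n i : (1 <= n)%N ->
  betti n i = (\sum_(i + 1 <= k < 2 ^ i + 1) betti_coeff i k * stirling2 n.+1 k)%N.
Proof.
move=> n1; case: (leqP i n) => [le|lt]; last first.
  rewrite /betti leqNgt lt big_nat_cond big1 // => k /andP[/andP[hk _] _].
  by rewrite stirling2_gt ?muln0 //; lia.
rewrite betti_partitions // (sum_by_statistic (B := n.+2) (betti_coeff i)); last first.
  by move=> P hP; rewrite ltnS card_partition_le.
apply: (@sum_ord_support (fun k => betti_coeff i k * stirling2 n.+1 k)%N).
- by rewrite leq_add2r; apply: ltnW; apply: ltn_expl.
- by move=> [|k] hk; rewrite ?stirling2_0 ?muln0 // betti_coeff_zero //; left; lia.
- by move=> k hk; rewrite betti_coeff_zero //; [lia | right; lia].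
- by move=> k hk; rewrite stirling2_gt ?muln0.
Qed.

Lemma betti_coeff_pos i k : (i + 1 <= k <= 2 ^ i)%N -> (0 < betti_coeff i k)%N.
Proof.
case: k => [|k]; first by rewrite addn1.
rewrite addn1 ltnS => /andP[le lt]; have [key key_inj pos] := nbc_sep_count_pos RR le lt.
by rewrite /betti_coeff (nbc_sep_count_key _ (@enum_key_inj _) key_inj).
Qed.

Lemma betti_coeff_bound i k :
  (betti_coeff i k * i`! <= 'C(2 ^ i - 1, k - 1) * (k - 1)`!)%N.
Proof. by rewrite bin_ffact [(k - 1)%N]subn1; apply: nbc_sep_count_bound. Qed.

Theorem theorem1p2 :
  exists c : nat -> nat -> nat,
    (forall i k : nat, (i + 1 <= k <= 2 ^ i)%N ->
       (0 < c i k)%N /\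
       ((c i k)%:R <= ('C(2 ^ i - 1, k - 1))%:R * ((k - 1)`!)%:R / (i`!)%:R
         :> rat)%R) /\
    (forall i n : nat, (1 <= n)%N ->
       betti n i = (\sum_(i + 1 <= k < 2 ^ i + 1) c i k * stirling2 n.+1 k)%N).
Proof.
exists betti_coeff; split; last by move=> i n; apply: betti_formula.
move=> i k range; split; first exact: betti_coeff_pos.
rewrite ler_pdivlMr ?ltr0n ?fact_gt0 // -!natrM ler_nat.
exact: betti_coeff_bound.
Qed.
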